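(* Let $0<\alpha<1$, let $x>0$ be fixed, let $y$ be a sufficiently differentiable function on $[0,x]$, and for a positive integer $n$ put $h=x/n$, $y_j=y(jh)$. Then, as $n\to\infty$, $$\frac{1}{h^\alpha}\sum_{k=0}^{n}\sigma_k^{(\alpha)}y_{n-k}=h^{2-\alpha}\sum_{k=1}^{n-1}k^{1-\alpha}\,y''\big((n-k)h\big)+(nh)^{1-\alpha}\,y'\!\left(\tfrac{h}{2}\right)+O\left(h^2\right).$$
   Context: Define $\sigma_0^{(\alpha)}=1$, $\sigma_n^{(\alpha)}=(n-1)^{1-\alpha}-n^{1-\alpha}$, and $\sigma_k^{(\alpha)}=(k-1)^{1-\alpha}-2k^{1-\alpha}+(k+1)^{1-\alpha}$ for $1\le k\le n-1$. ''Sufficiently differentiable'' means $y\in C^r[0,x]$ for some sufficiently large $r$. *)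

From Stdlib Require Import Reals Lra Lia.
From Coquelicot Require Import Coquelicot.
Open Scope R_scope.

(* real power t^a for t >= 0 with the convention 0^a = 0 (used with a = 1-alpha > 0);
   Stdlib's Rpower 0 a would give 1, hence this wrapper. *)
Definition rpow (t a : R) : R := if Req_EM_T t 0 then 0 else Rpower t a.

Definition sigma_a (alpha : R) (n k : nat) : R :=
  if (k =? 0)%nat then 1
  else if (k =? n)%nat then rpow (INR (n - 1)) (1 - alpha) - rpow (INR n) (1 - alpha)
  else rpow (INR (k - 1)) (1 - alpha) - 2 * rpow (INR k) (1 - alpha)
       + rpow (INR (k + 1)) (1 - alpha).

Definition C_r_on (r : nat) (a b : R) (y : R -> R) : Prop :=
  forall k : nat, (k <= r)%nat -> forall t : R, a <= t <= b ->
    ex_derive_n y k t /\ continuous (Derive_n y k) t.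

(** Write [w_k = k^(1-alpha)], so that [sigma_k] is the second difference of
    the weights [w].  Summation by parts moves this second difference onto the
    samples: the scheme becomes [h^-alpha] times
    [w_n (y_1 - y_0) + sum_(k=1)^(n-1) w_k (y_(n-k+1) - 2 y_(n-k) + y_(n-k-1))].
    By Taylor's formula each second difference is [h^2 y''((n-k)h) + O(h^4)]
    and [y_1 - y_0 = h y'(h/2) + O(h^3)].  Since [0 <= w_k <= w_n] and
    [h^-alpha w_n h = x^(1-alpha)], the n remainders of size [O(h^4)] and the
    single one of size [O(h^3)] add up to [O(h^2)]. *)

From Stdlib Require Import Reals Lra Lia.
From Coquelicot Require Import Coquelicot.
Open Scope R_scope.

Lemma Rpower_minus (h p q : R) : Rpower h (p - q) = Rpower h p / Rpower h q.
Proof. unfold Rminus, Rdiv. now rewrite Rpower_plus, Rpower_Ropp. Qed.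

Lemma rpow_INR_pos (k : nat) (p : R) : (1 <= k)%nat -> rpow (INR k) p = Rpower (INR k) p.
Proof.
  intros Hk. unfold rpow. destruct (Req_EM_T (INR k) 0) as [E|]; [|reflexivity].
  apply (le_INR 1) in Hk. simpl in Hk. lra.
Qed.

Lemma rpow_0 (p : R) : rpow 0 p = 0.
Proof. unfold rpow. destruct (Req_EM_T 0 0); [reflexivity | lra]. Qed.

Lemma rpow_1 (p : R) : rpow 1 p = 1.
Proof.
  rewrite (rpow_INR_pos 1) by lia. simpl. unfold Rpower. rewrite ln_1, Rmult_0_r. apply exp_0.
Qed.

Lemma rpow_INR_nonneg_le (j k : nat) (p : R) : 0 <= p -> (j <= k)%nat ->
  0 <= rpow (INR j) p <= rpow (INR k) p.
Proof.
  intros Hp Hjk. destruct j as [|j].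
  - rewrite rpow_0. split; [lra|].
    destruct k as [|k]; [rewrite rpow_0; lra|].
    rewrite rpow_INR_pos by lia. left; apply exp_pos.
  - rewrite !rpow_INR_pos by lia. split; [left; apply exp_pos|].
    apply Rle_Rpower_l; [exact Hp|]. split; [apply lt_0_INR; lia | apply le_INR; lia].
Qed.

Lemma sum_n_m_Rmult_l (c : R) (u : nat -> R) (n m : nat) :
  sum_n_m (fun k => c * u k) n m = c * sum_n_m u n m.
Proof. exact (sum_n_m_mult_l (K := R_Ring) c u n m). Qed.

Lemma sum_n_m_Rminus (u v : nat -> R) (n m : nat) :
  sum_n_m (fun k => u k - v k) n m = sum_n_m u n m - sum_n_m v n m.
Proof.
  rewrite (sum_n_m_ext _ (fun k => plus (u k) (-1 * v k))) by (intros k; cbn; ring).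
  rewrite sum_n_m_plus, sum_n_m_Rmult_l. cbn. ring.
Qed.

Lemma Rabs_sum_n_m_le (f : nat -> R) (m : nat) (B : R) :
  (forall k, (1 <= k <= m)%nat -> Rabs (f k) <= B) ->
  Rabs (sum_n_m f 1 m) <= INR m * B.
Proof.
  induction m as [|m IHm]; intros Hf.
  - rewrite sum_n_m_zero by lia. change (Rabs 0 <= 0 * B). rewrite Rabs_R0. lra.
  - rewrite sum_n_Sm by lia. change plus with Rplus. rewrite S_INR.
    assert (Rabs (sum_n_m f 1 m) <= INR m * B) by (apply IHm; intros; apply Hf; lia).
    assert (Rabs (f (S m)) <= B) by (apply Hf; lia).
    pose proof (Rabs_triang (sum_n_m f 1 m) (f (S m))). lra.
Qed.

Lemma continuous_bounded_on_segment (g : R -> R) (a b : R) : a <= b ->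
  (forall t, a <= t <= b -> continuous g t) ->
  exists M, forall t, a <= t <= b -> Rabs (g t) <= M.
Proof.
  intros Hab Hg.
  destruct (continuity_ab_maj (fun t => Rabs (g t)) a b Hab) as [c [Hc _]].
  - intros t Ht. apply (continuity_pt_comp g Rabs).
    + apply continuity_pt_filterlim, Hg, Ht.
    + apply Rcontinuity_abs.
  - exists (Rabs (g c)). exact Hc.
Qed.

Definition midpoint_error (y : R -> R) (h : R) : R :=
  y h - y 0 - h * Derive y (h / 2).

Definition second_diff_error (y : R -> R) (h s : R) : R :=
  y (s + 2 * h) - 2 * y (s + h) + y s - h ^ 2 * Derive_n y 2 (s + h).

Lemma midpoint_error_le (y : R -> R) (h M3 : R) : 0 < h ->
  (forall t, 0 <= t <= h -> forall k, (k <= 3)%nat -> ex_derive_n y k t) ->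
  (forall t, 0 <= t <= h -> Rabs (Derive_n y 3 t) <= M3) ->
  Rabs (midpoint_error y h) <= M3 * h ^ 3.
Proof.
  intros hp Hd HM.
  destruct (Taylor_Lagrange y 2 0 h) as [z1 [Hz1 E1]]; [lra | |].
  { intros t Ht k Hk; apply Hd; lra || lia. }
  destruct (Taylor_Lagrange (Derive_n y 1) 1 0 (h / 2)) as [z2 [Hz2 E2]]; [lra | |].
  { intros t Ht [|[|[|k]]] Hk; [exact I | | | lia].
    - exact (Hd t ltac:(lra) 2%nat ltac:(lia)).
    - exact (Hd t ltac:(lra) 3%nat ltac:(lia)). }
  change (Derive_n (Derive_n y 1) 2 z2) with (Derive_n y 3 z2) in E2.
  pose proof (HM z1 ltac:(lra)) as B1. pose proof (HM z2 ltac:(lra)) as B2.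
  set (d1 := Derive_n y 3 z1) in *. set (d2 := Derive_n y 3 z2) in *. clearbody d1 d2.
  unfold midpoint_error. change (Derive y (h / 2)) with (Derive_n y 1 (h / 2)).
  rewrite E1, E2. simpl.
  match goal with |- Rabs ?e <= _ =>
    replace e with (h ^ 3 * (1 / 6 * d1 - 1 / 8 * d2)) by (simpl; field) end.
  rewrite Rabs_mult, Rabs_right by (apply Rle_ge, pow_le; lra).
  apply Rabs_le_between in B1; apply Rabs_le_between in B2.
  assert (Rabs (1 / 6 * d1 - 1 / 8 * d2) <= M3) by (apply Rabs_le; lra).
  assert (0 <= h ^ 3) by (apply pow_le; lra).
  nra.
Qed.

Lemma second_diff_error_le (y : R -> R) (s h M4 : R) : 0 < h ->
  (forall t, s <= t <= s + 2 * h -> forall k, (k <= 4)%nat -> ex_derive_n y k t) ->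
  (forall t, s <= t <= s + 2 * h -> Rabs (Derive_n y 4 t) <= M4) ->
  Rabs (second_diff_error y h s) <= 2 * M4 * h ^ 4.
Proof.
  intros hp Hd HM.
  destruct (Taylor_Lagrange y 3 s (s + h)) as [z1 [Hz1 E1]]; [lra | |].
  { intros t Ht k Hk; apply Hd; lra || lia. }
  destruct (Taylor_Lagrange y 3 s (s + 2 * h)) as [z2 [Hz2 E2]]; [lra | |].
  { intros t Ht k Hk; apply Hd; lra || lia. }
  destruct (Taylor_Lagrange (Derive_n y 2) 1 s (s + h)) as [z3 [Hz3 E3]]; [lra | |].
  { intros t Ht [|[|[|k]]] Hk; [exact I | | | lia].
    - exact (Hd t ltac:(lra) 3%nat ltac:(lia)).
    - exact (Hd t ltac:(lra) 4%nat ltac:(lia)). }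
  change (Derive_n (Derive_n y 2) 2 z3) with (Derive_n y 4 z3) in E3.
  pose proof (HM z1 ltac:(lra)) as B1. pose proof (HM z2 ltac:(lra)) as B2. pose proof (HM z3 ltac:(lra)) as B3.
  set (d1 := Derive_n y 4 z1) in *. set (d2 := Derive_n y 4 z2) in *.
  set (d3 := Derive_n y 4 z3) in *. clearbody d1 d2 d3.
  unfold second_diff_error. rewrite E1, E2, E3. simpl.
  match goal with |- Rabs ?e <= _ =>
    replace e with (h ^ 4 * (2 / 3 * d2 - 1 / 12 * d1 - 1 / 2 * d3)) by (simpl; field) end.
  rewrite Rabs_mult, Rabs_right by (apply Rle_ge, pow_le; lra).
  apply Rabs_le_between in B1; apply Rabs_le_between in B2; apply Rabs_le_between in B3.
  assert (Rabs (2 / 3 * d2 - 1 / 12 * d1 - 1 / 2 * d3) <= 2 * M4) by (apply Rabs_le; lra).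
  assert (0 <= h ^ 4) by (apply pow_le; lra).
  nra.
Qed.

Definition sigma_of_weights (a : nat -> R) (n k : nat) : R :=
  if (k =? 0)%nat then a 1%nat
  else if (k =? n)%nat then a (n - 1)%nat - a n
  else a (k - 1)%nat - 2 * a k + a (k + 1)%nat.

Lemma sigma_a_of_weights (alpha : R) (n k : nat) :
  sigma_a alpha n k = sigma_of_weights (fun j => rpow (INR j) (1 - alpha)) n k.
Proof.
  unfold sigma_a, sigma_of_weights. destruct (k =? 0)%nat; [|reflexivity].
  simpl INR. now rewrite rpow_1.
Qed.

Lemma sum_sigma_by_parts (a z : nat -> R) (m : nat) : a 0%nat = 0 ->
  sum_n_m (fun k => sigma_of_weights a (S m) k * z k) 0 (S m) =
  a (S m) * (z m - z (S m))
  + sum_n_m (fun k => a k * (z (k - 1)%nat - 2 * z k + z (S k))) 1 m.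
Proof.
  intros a0. induction m as [|m IHm].
  - rewrite sum_n_Sm, sum_n_n, sum_n_m_zero by lia.
    unfold sigma_of_weights; simpl. change plus with Rplus. change zero with 0.
    rewrite a0. ring.
  - rewrite 3!sum_n_Sm by lia. rewrite sum_n_Sm in IHm by lia.
    rewrite (sum_n_m_ext_loc _ (fun k => sigma_of_weights a (S m) k * z k)).
    2:{ intros k Hk. unfold sigma_of_weights.
        destruct (Nat.eqb_spec k 0); [reflexivity|].
        destruct (Nat.eqb_spec k (S (S m))), (Nat.eqb_spec k (S m)); [lia | lia | lia | reflexivity]. }
    change plus with Rplus in *.
    unfold sigma_of_weights in *. simpl Nat.eqb in *.
    rewrite Nat.eqb_refl in *.
    replace (m =? S m)%nat with false by (symmetry; apply Nat.eqb_neq; lia).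
    replace (S (S m) - 1)%nat with (S m) by lia.
    replace (S m - 1)%nat with m in * by lia.
    replace (S m + 1)%nat with (S (S m)) by lia.
    lra.
Qed.

Lemma sum_sigma_remainder_eq (a : nat -> R) (y : R -> R) (m : nat) (h : R) : a 0%nat = 0 ->
  sum_n_m (fun k => sigma_of_weights a (S m) k * y (INR (S m - k) * h)) 0 (S m)
  - h ^ 2 * sum_n_m (fun k => a k * Derive_n y 2 (INR (S m - k) * h)) 1 m
  - a (S m) * h * Derive y (h / 2)
  = a (S m) * midpoint_error y h
    + sum_n_m (fun k => a k * second_diff_error y h (INR (m - k) * h)) 1 m.
Proof.
  intros a0. rewrite sum_sigma_by_parts by exact a0.
  replace (S m - m)%nat with 1%nat by lia. rewrite Nat.sub_diag.
  rewrite <- sum_n_m_Rmult_l.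
  rewrite (sum_n_m_ext_loc (fun k => a k * second_diff_error y h (INR (m - k) * h))
     (fun k => a k * (y (INR (S m - (k - 1)) * h) - 2 * y (INR (S m - k) * h)
                      + y (INR (S m - S k) * h))
             - h ^ 2 * (a k * Derive_n y 2 (INR (S m - k) * h)))).
  2:{ intros k Hk. unfold second_diff_error.
      match goal with |- ?l = ?r => change (@eq R l r) end.
      replace (S m - (k - 1))%nat with (m - k + 2)%nat by lia.
      replace (S m - k)%nat with (m - k + 1)%nat by lia.
      replace (S m - S k)%nat with (m - k)%nat by lia.
      rewrite !plus_INR. simpl INR.
      replace ((INR (m - k) + (1 + 1)) * h) with (INR (m - k) * h + 2 * h) by ring.
      replace ((INR (m - k) + 1) * h) with (INR (m - k) * h + h) by ring.
      ring. }
  rewrite sum_n_m_Rminus. unfold midpoint_error. simpl INR. rewrite Rmult_1_l, Rmult_0_l. ring.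
Qed.

Section SchemeError.

Variables (alpha x M3 M4 : R) (y : R -> R).
Hypotheses (Halpha : 0 < alpha < 1) (Hx : 0 < x) (Hy : C_r_on 4 0 x y).
Hypothesis HM3 : forall t, 0 <= t <= x -> Rabs (Derive_n y 3 t) <= M3.
Hypothesis HM4 : forall t, 0 <= t <= x -> Rabs (Derive_n y 4 t) <= M4.

Lemma ex_derive_n_segment (t : R) (k : nat) : 0 <= t <= x -> (k <= 4)%nat ->
  ex_derive_n y k t.
Proof. intros Ht Hk. exact (proj1 (Hy k Hk t Ht)). Qed.

Lemma scheme_remainder_le (a : nat -> R) (m : nat) (h : R) :
  0 < h -> INR (S m) * h = x -> (forall k, (k <= S m)%nat -> 0 <= a k <= a (S m)) ->
  Rabs (a (S m) * midpoint_error y h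
        + sum_n_m (fun k => a k * second_diff_error y h (INR (m - k) * h)) 1 m)
  <= a (S m) * h ^ 3 * (M3 + 2 * M4 * x).
Proof.
  intros hp nh Ha.
  assert (Hm : INR m * h + h = x) by (rewrite <- nh, S_INR; ring).
  assert (M4p : 0 <= M4) by (eapply Rle_trans; [apply Rabs_pos | apply (HM4 0); lra]).
  assert (Hmid : Rabs (midpoint_error y h) <= M3 * h ^ 3).
  { apply midpoint_error_le; [exact hp | |].
    - intros t Ht k Hk. apply ex_derive_n_segment; [|lia].
      pose proof (pos_INR m). nra.
    - intros t Ht. apply HM3. pose proof (pos_INR m). nra. }
  assert (Hsum : Rabs (sum_n_m (fun k => a k * second_diff_error y h (INR (m - k) * h)) 1 m)
                 <= INR m * (a (S m) * (2 * M4 * h ^ 4))).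
  { apply Rabs_sum_n_m_le. intros k Hk.
    assert (Hs : 0 <= INR (m - k) * h /\ INR (m - k) * h + 2 * h <= x).
    { rewrite <- nh, minus_INR, S_INR by lia.
      pose proof (le_INR 1 k ltac:(lia)). pose proof (le_INR k m ltac:(lia)).
      simpl INR in *. nra. }
    rewrite Rabs_mult, (Rabs_right (a k)) by (apply Rle_ge, Ha; lia).
    apply Rmult_le_compat; [apply Ha; lia | apply Rabs_pos | apply Ha; lia |].
    apply second_diff_error_le; [exact hp | |].
    - intros t Ht k' Hk'. apply ex_derive_n_segment; [lra | exact Hk'].
    - intros t Ht. apply HM4. lra. }
  assert (Han : 0 <= a (S m)) by (apply Ha; lia).
  assert (Hh3 : 0 <= h ^ 3) by (apply pow_le; lra).
  assert (Hmh : INR m * h <= x) by lra.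
  eapply Rle_trans; [apply Rabs_triang|].
  rewrite Rabs_mult, (Rabs_right (a (S m))) by lra.
  assert (a (S m) * Rabs (midpoint_error y h) <= a (S m) * (M3 * h ^ 3))
    by (apply Rmult_le_compat_l; lra).
  assert (INR m * (a (S m) * (2 * M4 * h ^ 4)) <= a (S m) * h ^ 3 * (2 * M4) * x).
  { replace (INR m * (a (S m) * (2 * M4 * h ^ 4)))
      with (a (S m) * h ^ 3 * (2 * M4) * (INR m * h)) by ring.
    apply Rmult_le_compat_l; [|exact Hmh].
    apply Rmult_le_pos; [apply Rmult_le_pos|]; lra. }
  lra.
Qed.

Lemma scheme_error_le (n : nat) : (1 <= n)%nat ->
  Rabs ( / Rpower (x / INR n) alpha
           * sum_n_m (fun k => sigma_a alpha n k * y (INR (n - k) * (x / INR n))) 0 n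
         - ( Rpower (x / INR n) (2 - alpha)
               * sum_n_m (fun k => rpow (INR k) (1 - alpha)
                                   * Derive_n y 2 (INR (n - k) * (x / INR n))) 1 (n - 1)
             + Rpower (INR n * (x / INR n)) (1 - alpha) * Derive y (x / INR n / 2) ))
  <= Rpower x (1 - alpha) * (M3 + 2 * M4 * x) * (x / INR n) ^ 2.
Proof.
  intros Hn. destruct n as [|m]; [lia|].
  replace (S m - 1)%nat with m by lia.
  assert (n0 : 0 < INR (S m)) by (apply lt_0_INR; lia).
  set (h := x / INR (S m)).
  assert (nh : INR (S m) * h = x) by (unfold h; field; lra).
  assert (hp : 0 < h) by (unfold h; apply Rdiv_lt_0_compat; lra).
  set (w := fun k : nat => rpow (INR k) (1 - alpha)).
  set (P := Rpower h alpha).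
  assert (Pp : 0 < P) by apply exp_pos.
  assert (Hscale : Rpower x (1 - alpha) = w (S m) * h / P).
  { unfold w, P. rewrite <- nh, rpow_INR_pos, <- Rpower_mult_distr by (lia || lra).
    rewrite (Rpower_minus h), Rpower_1 by lra. field. apply Rgt_not_eq, exp_pos. }
  assert (Hh2 : Rpower h (2 - alpha) = h ^ 2 / P).
  { rewrite Rpower_minus, <- Rpower_pow by lra. reflexivity. }
  rewrite (sum_n_m_ext _ (fun k => sigma_of_weights w (S m) k * y (INR (S m - k) * h)))
    by (intros k; now rewrite sigma_a_of_weights).
  fold h P. rewrite nh, Hh2, Hscale.
  match goal with |- Rabs ?e <= _ => replace e with
    (/ P * (sum_n_m (fun k => sigma_of_weights w (S m) k * y (INR (S m - k) * h)) 0 (S m)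
            - h ^ 2 * sum_n_m (fun k => w k * Derive_n y 2 (INR (S m - k) * h)) 1 m
            - w (S m) * h * Derive y (h / 2))) by (unfold w; cbv beta; field; lra) end.
  rewrite sum_sigma_remainder_eq by (unfold w; simpl INR; apply rpow_0).
  rewrite Rabs_mult, Rabs_inv, (Rabs_right P) by lra.
  apply Rle_trans with (/ P * (w (S m) * h ^ 3 * (M3 + 2 * M4 * x))).
  - apply Rmult_le_compat_l; [left; apply Rinv_0_lt_compat, Pp|].
    apply scheme_remainder_le; [exact hp | exact nh |].
    intros k Hk. apply rpow_INR_nonneg_le; [lra | exact Hk].
  - right. field. lra.
Qed.

End SchemeError.

Theorem lemma5 :
  exists r : nat,
  forall (alpha x : R), 0 < alpha < 1 -> 0 < x ->
  forall y : R -> R, C_r_on r 0 x y ->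
  exists (C : R) (N : nat), forall n : nat, (1 <= n)%nat -> (N <= n)%nat ->
    Rabs ( / Rpower (x / INR n) alpha
             * sum_n_m (fun k => sigma_a alpha n k * y (INR (n - k) * (x / INR n))) 0 n
           - ( Rpower (x / INR n) (2 - alpha)
                 * sum_n_m (fun k => rpow (INR k) (1 - alpha)
                                     * Derive_n y 2 (INR (n - k) * (x / INR n))) 1 (n - 1)
               + Rpower (INR n * (x / INR n)) (1 - alpha) * Derive y (x / INR n / 2) ))
    <= C * (x / INR n) ^ 2.
Proof.
  exists 4%nat. intros alpha x Halpha Hx y Hy.
  destruct (continuous_bounded_on_segment (Derive_n y 3) 0 x) as [M3 HM3]; [lra | |].
  { intros t Ht. exact (proj2 (Hy 3%nat ltac:(lia) t Ht)). }
  destruct (continuous_bounded_on_segment (Derive_n y 4) 0 x) as [M4 HM4]; [lra | |].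
  { intros t Ht. exact (proj2 (Hy 4%nat ltac:(lia) t Ht)). }
  exists (Rpower x (1 - alpha) * (M3 + 2 * M4 * x)), 0%nat.
  intros n Hn _. exact (scheme_error_le alpha x M3 M4 y Halpha Hx Hy HM3 HM4 n Hn).
Qed.
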